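(* None of the semantics $\mathit{na}$, $\mathit{stg}$, $\mathit{cf2}$, $\mathit{tfcf2}$, $\mathit{cf1.5}$, $\mathit{stg2}$, $\mathit{tfstg2}$, $\mathit{stg1.5}$ satisfies the reinstatement criterion.
   Context: An argumentation framework (AF) is $\mathcal{F}=(A_{\mathcal{F}},R_{\mathcal{F}})$ with $R_{\mathcal{F}}\subseteq A_{\mathcal{F}}\times A_{\mathcal{F}}$; $a\rightarrow b$ means $(a,b)\in R_{\mathcal{F}}$. $S$ defends $a$ if every attacker of $a$ is attacked by some element of $S$. A semantics $\sigma$ (assigning a set $\sigma(\mathcal{F})$ of subsets of $A_{\mathcal{F}}$ to each AF) satisfies the reinstatement criterion if for every AF $\mathcal{F}$ and every $S\in\sigma(\mathcal{F})$, whenever $S$ defends an argument $a$, then $a\in S$. $\mathcal{F}|_B=(A_{\mathcal{F}}\cap B,R_{\mathcal{F}}\cap(B\times B))$. Conflict-free: no $a,b\in S$ with $a\rightarrow b$. $\mathit{na}$: $\subseteq$-maximal conflict-free sets. $S^\oplus=S\cup\{x:\exists y\in S,\ y\rightarrow x\}$; $\mathit{stg}$: conflict-free $S$ with no conflict-free $T$ such that $S^\oplus\subsetneq T^\oplus$. $\mathrm{SCC}$: strongly connected components of the attack graph. $D_S(X)=\{b\in X:\exists a\in S\setminus X,\ a\rightarrow b\}$. $\mathit{cf2}$: $S\in\mathit{cf2}(\mathcal{F})$ iff either $|\mathrm{SCC}(\mathcal{F})|=1$ and $S$ is naive in $\mathcal{F}$, or $|\mathrm{SCC}(\mathcal{F})|\ne1$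 and for each $X\in\mathrm{SCC}(\mathcal{F})$, $S\cap X\in\mathit{cf2}(\mathcal{F}|_{X\setminus D_S(X)})$, recursively (membership requires the recursion to be well-founded). $\mathit{stg2}$: same with stage. $\mathit{tfcf2}$/$\mathit{tfstg2}$: $C^0_S(a)=\mathrm{SCC}(a)$; $C^{\alpha+1}_S(a)$ = component of $a$ in $\mathcal{F}|_{C^\alpha_S(a)\setminus D_S(C^\alpha_S(a))}$; at limits $\lambda$, component of $a$ in $\mathcal{F}|_{\bigcap_{\alpha<\lambda}C^\alpha_S(a)}$; $\alpha_S(a)$ = least $\alpha$ with $a\notin C^\alpha_S(a)$ or $C^{\alpha+1}_S(a)=C^\alpha_S(a)$; $S$ is a member iff conflict-free and for each $a$, $a\notin C^{\alpha_S(a)}_S(a)$ or $S\cap C^{\alpha_S(a)}_S(a)$ is naive (resp. stage) in $\mathcal{F}|_{C^{\alpha_S(a)}_S(a)}$. $\mathit{cf1.5}$/$\mathit{stg1.5}$: $S$ conflict-free and for each $X\in\mathrm{SCC}(\mathcal{F})$, $S\cap X$ is naive (resp. stage) in $\mathcal{F}|_{X\setminus D_S(X)}$. *)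

From mathcomp Require Import all_boot.
Set Implicit Arguments. Unset Strict Implicit. Unset Printing Implicit Defensive.

(* An AF: a finite set of arguments and an attack relation; the effective
   attack relation is rel_ restricted to args x args. *)
Record AF (T : finType) := mkAF { args : {set T}; rel_ : rel T }.

Section AFDefs.
Variable T : finType.
Implicit Types (F : AF T) (S X B : {set T}).

Definition att F : rel T :=
  fun a b => [&& a \in args F, b \in args F & rel_ F a b].

Definition restrict F B : AF T := mkAF (args F :&: B) (rel_ F).

Definition defends F S (a : T) : Prop :=
  forall b, att F b a -> exists2 c, c \in S & att F c b.

Definition conflict_free F S : Prop :=
  S \subset args F /\ forall a b, a \in S -> b \in S -> ~~ att F a b.

Definition naive F S : Prop :=
  conflict_free F S /\ forall S', conflict_free F S' -> S \subset S' -> S' = S.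

Definition range F S : {set T} :=
  S :|: [set x | [exists y, (y \in S) && att F y x]].

Definition stage F S : Prop :=
  conflict_free F S /\
  ~ (exists S', conflict_free F S' /\ range F S \proper range F S').

(* strongly connected component of a (empty if a is not an argument) *)
Definition scc F (a : T) : {set T} :=
  [set b in args F | connect (att F) a b && connect (att F) b a].

Definition SCCs F : {set {set T}} := [set scc F a | a in args F].

Definition Dset F S X : {set T} :=
  [set b in X | [exists a, [&& a \in S, a \notin X & att F a b]]].

Inductive scc_rec (base : AF T -> {set T} -> Prop) : AF T -> {set T} -> Prop :=
| scc_rec_one F S :
    #|SCCs F| = 1 -> base F S -> scc_rec base F S
| scc_rec_many F S :
    #|SCCs F| <> 1 -> S \subset args F ->
    (forall X, X \in SCCs F -> scc_rec base (restrict F (X :\: Dset F S X)) (S :&: X)) ->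
    scc_rec base F S.

Definition scc_one_step (base : AF T -> {set T} -> Prop) F S : Prop :=
  conflict_free F S /\
  forall X, X \in SCCs F -> base (restrict F (X :\: Dset F S X)) (S :&: X).

(* C^n_S(a); on finite AFs the sequence reaches alpha_S(a) at a finite stage,
   so limit stages are never needed. *)
Fixpoint Cseq F S (a : T) (n : nat) : {set T} :=
  match n with
  | 0 => scc F a
  | n'.+1 => let C := Cseq F S a n' in scc (restrict F (C :\: Dset F S C)) a
  end.

Definition is_alpha F S (a : T) (n : nat) : Prop :=
  (a \notin Cseq F S a n \/ Cseq F S a n.+1 = Cseq F S a n) /\
  (forall m, m < n -> a \in Cseq F S a m /\ Cseq F S a m.+1 <> Cseq F S a m).

Definition scc_tf (base : AF T -> {set T} -> Prop) F S : Prop :=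
  conflict_free F S /\
  forall a n, a \in args F -> is_alpha F S a n ->
    a \notin Cseq F S a n \/
    base (restrict F (Cseq F S a n)) (S :&: Cseq F S a n).

End AFDefs.

Definition semantics := forall T : finType, AF T -> {set T} -> Prop.

Definition na_sem : semantics := fun T => @naive T.
Definition stg_sem : semantics := fun T => @stage T.
Definition cf2_sem : semantics := fun T => scc_rec (@naive T).
Definition stg2_sem : semantics := fun T => scc_rec (@stage T).
Definition tfcf2_sem : semantics := fun T => scc_tf (@naive T).
Definition tfstg2_sem : semantics := fun T => scc_tf (@stage T).
Definition cf15_sem : semantics := fun T => scc_one_step (@naive T).
Definition stg15_sem : semantics := fun T => scc_one_step (@stage T).

Definition reinstatement (sigma : semantics) : Prop :=
  forall (T : finType) (F : AF T) (S : {set T}) (a : T),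
    sigma T F S -> a \in args F -> defends F S a -> a \in S.

From mathcomp Require Import all_boot.
Set Implicit Arguments. Unset Strict Implicit. Unset Printing Implicit Defensive.

(* Counterexample: the odd cycle a0 -> a1 -> a2 -> a0. The set {a0} is naive
   and even stage (its range {a0, a1} cannot be enlarged, since any
   conflict-free set is a singleton {x} with range {x, x+1}), and it defends
   a2, whose only attacker a1 is attacked by a0; yet a2 is not in {a0}.
   The cycle is a single SCC, so D_S of it is empty and every SCC-based
   semantics built on na or stg coincides with its base semantics here. *)

Lemma not_reinstatement (sigma : semantics) (T : finType) (F : AF T)
    (S : {set T}) (a : T) :
  sigma T F S -> a \in args F -> defends F S a -> a \notin S ->
  ~ reinstatement sigma.
Proof. by move=> sigmaS aF defSa /negP aNS /(_ T F S a sigmaS aF defSa). Qed.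

Lemma rangeP (T : finType) (F : AF T) (S : {set T}) (x : T) :
  reflect (exists2 y, y \in S & (x == y) || att F y x) (x \in range F S).
Proof.
rewrite !inE; apply: (iffP orP) => [[xS | /existsP [y /andP [yS yx]]] | [y yS]].
- by exists x; rewrite ?eqxx.
- by exists y; rewrite ?yx ?orbT.
- by case/orP => [/eqP -> | yx]; [left | right; apply/existsP; exists y; rewrite yS].
Qed.

Lemma proper_setC1 (T : finType) (x : T) (A : {set T}) :
  [set~ x] \proper A -> A = setT.
Proof.
case/properP => subA [z zA]; rewrite in_setC1 negbK => /eqP zx.
apply/setP => y; rewrite in_setT; have [-> | yx] := eqVneq y x; first by rewrite -zx.
by apply: (subsetP subA); rewrite in_setC1.
Qed.

Section SingleSCC.
Variables (T : finType) (F : AF T).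
Implicit Types (S : {set T}) (a : T).

Lemma restrict_args : restrict F (args F) = F.
Proof. by case: F => A r; rewrite /restrict /= setIid. Qed.

Lemma Dset_args S : Dset F S (args F) = set0.
Proof.
apply/setP => b; rewrite !inE; apply/negbTE/negP.
by case/andP => _ /existsP [a /and3P [_ /negP aNF /and3P [aF _ _]]].
Qed.

Definition strongly_connected :=
  forall a b, a \in args F -> b \in args F -> connect (att F) a b.

Hypothesis F_sconn : strongly_connected.

Lemma scc_strongly_connected a : a \in args F -> scc F a = args F.
Proof.
move=> aF; apply/setP => b; rewrite inE.
by case bF: (b \in args F); rewrite //= !F_sconn.
Qed.

Lemma SCCs_strongly_connected a : a \in args F -> SCCs F = [set args F].
Proof.
move=> aF; apply/setP => X; rewrite inE; apply/imsetP/eqP => [[b bF ->] | ->].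
  exact: scc_strongly_connected.
by exists a; rewrite ?scc_strongly_connected.
Qed.

Lemma Cseq_strongly_connected S a n : a \in args F -> Cseq F S a n = args F.
Proof.
move=> aF; elim: n => [|n IHn] /=; first exact: scc_strongly_connected.
by rewrite IHn Dset_args setD0 restrict_args scc_strongly_connected.
Qed.

Variable base : AF T -> {set T} -> Prop.

Lemma scc_rec_strongly_connected S a : a \in args F -> base F S -> scc_rec base F S.
Proof. by move=> aF baseS; apply: scc_rec_one; rewrite ?(SCCs_strongly_connected aF) ?cards1. Qed.

Lemma scc_one_step_strongly_connected S a :
  a \in args F -> conflict_free F S -> base F S -> scc_one_step base F S.
Proof.
move=> aF cfS baseS; split=> // X; rewrite (SCCs_strongly_connected aF) inE => /eqP ->.
by rewrite Dset_args setD0 restrict_args (setIidPl cfS.1).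
Qed.

Lemma scc_tf_strongly_connected S : conflict_free F S -> base F S -> scc_tf base F S.
Proof.
move=> cfS baseS; split=> // a n aF _; right.
by rewrite Cseq_strongly_connected // restrict_args (setIidPl cfS.1).
Qed.

End SingleSCC.

Definition a0 : 'I_3 := @Ordinal 3 0 isT.
Definition a1 : 'I_3 := @Ordinal 3 1 isT.
Definition a2 : 'I_3 := @Ordinal 3 2 isT.

Definition cycle3 : AF 'I_3 := mkAF setT (fun x y => val y == (val x).+1 %% 3).

Lemma ord3P (x : 'I_3) : [\/ x = a0, x = a1 | x = a2].
Proof.
case: x => [[|[|[|m]]] ?] //;
  [constructor 1 | constructor 2 | constructor 3]; exact: val_inj.
Qed.

Lemma att_cycle3 x y : att cycle3 x y = (val y == (val x).+1 %% 3).
Proof. by rewrite /att !in_setT. Qed.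

Lemma cycle3_strongly_connected : strongly_connected cycle3.
Proof.
have cyc : cycle (att cycle3) [:: a0; a1; a2] by rewrite /= !att_cycle3.
have mem x : x \in [:: a0; a1; a2] by rewrite !inE; case: (ord3P x) => ->.
by move=> x y _ _; apply: connect_cycle cyc _ _ (mem x) (mem y).
Qed.

Lemma cf_cycle3_eq S x y :
  conflict_free cycle3 S -> x \in S -> y \in S -> x = y.
Proof.
case=> _ cfS xS yS; apply/eqP; apply: contraT => neq_xy.
have : att cycle3 x y || att cycle3 y x.
  by move: neq_xy; rewrite !att_cycle3; case: (ord3P x) => ->; case: (ord3P y) => ->.
by case/orP => [xy | yx]; [move: (cfS _ _ xS yS) | move: (cfS _ _ yS xS)]; rewrite ?xy ?yx.
Qed.

Lemma cf_cycle3_a0 : conflict_free cycle3 [set a0].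
Proof.
split; first exact: subsetT.
by move=> x y /set1P -> /set1P ->; rewrite att_cycle3.
Qed.

Lemma naive_cycle3_a0 : naive cycle3 [set a0].
Proof.
split=> [|S cfS sub0]; first exact: cf_cycle3_a0.
have a0S : a0 \in S by rewrite (subsetP sub0) ?set11.
by apply/setP => x; apply/idP/set1P => [xS | ->]; first exact: cf_cycle3_eq xS a0S.
Qed.

Lemma range_cycle3_a0 : range cycle3 [set a0] = [set~ a2].
Proof.
apply/setP => x; rewrite in_setC1; apply/rangeP/idP => [[y /set1P ->] | nx2].
  by rewrite att_cycle3; case: (ord3P x) => ->.
by exists a0; rewrite ?set11 // att_cycle3; case: (ord3P x) nx2 => ->.
Qed.

Lemma range_cycle3_neqT S : conflict_free cycle3 S -> range cycle3 S != setT.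
Proof.
move=> cfS; apply/eqP => rangeT.
have /rangeP [y0 y0S cov0] : a0 \in range cycle3 S by rewrite rangeT in_setT.
have /rangeP [y1 y1S cov1] : a1 \in range cycle3 S by rewrite rangeT in_setT.
have /rangeP [y2 y2S cov2] : a2 \in range cycle3 S by rewrite rangeT in_setT.
have e0 := cf_cycle3_eq cfS y0S y2S; have e1 := cf_cycle3_eq cfS y1S y2S.
subst y0 y1; move: cov0 cov1 cov2; rewrite !att_cycle3.
by case: (ord3P y2) => ->.
Qed.

Lemma stage_cycle3_a0 : stage cycle3 [set a0].
Proof.
split=> [|[S [cfS]]]; first exact: cf_cycle3_a0.
by rewrite range_cycle3_a0 => /proper_setC1 /eqP; apply/negP/range_cycle3_neqT.
Qed.

Lemma defends_cycle3_a2 : defends cycle3 [set a0] a2.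
Proof.
move=> b; rewrite att_cycle3; case: (ord3P b) => -> //= _.
by exists a0; rewrite ?set11 ?att_cycle3.
Qed.

Theorem theorem11 :
  ~ reinstatement na_sem /\ ~ reinstatement stg_sem /\
  ~ reinstatement cf2_sem /\ ~ reinstatement tfcf2_sem /\
  ~ reinstatement cf15_sem /\ ~ reinstatement stg2_sem /\
  ~ reinstatement tfstg2_sem /\ ~ reinstatement stg15_sem.
Proof.
have a2F : a2 \in args cycle3 by rewrite in_setT.
have a2N : a2 \notin [set a0] by rewrite in_set1.
have counterexample (sigma : semantics) :
    sigma _ cycle3 [set a0] -> ~ reinstatement sigma.
  by move=> sigmaS; apply: not_reinstatement sigmaS a2F defends_cycle3_a2 a2N.
have na := naive_cycle3_a0; have stg := stage_cycle3_a0.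
have cf := cf_cycle3_a0; have sc := cycle3_strongly_connected.
do !split; apply: counterexample.
- exact: na.
- exact: stg.
- exact: (scc_rec_strongly_connected sc a2F na).
- exact: (scc_tf_strongly_connected sc cf na).
- exact: (scc_one_step_strongly_connected sc a2F cf na).
- exact: (scc_rec_strongly_connected sc a2F stg).
- exact: (scc_tf_strongly_connected sc cf stg).
- exact: (scc_one_step_strongly_connected sc a2F cf stg).
Qed.
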